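(* For every semigroup $S$ and every endomorphism $\theta$ of $S$, the Bruck--Reilly extension $\mathsf{BR}(S,\theta)$ is not DSC.
   Context: $\mathsf{BR}(S,\theta)$ is the set $\mathbb{N}_0\times S\times\mathbb{N}_0$ with multiplication $(m,s,n)(p,t,q)=(m-n+k,\ (s\theta^{k-n})(t\theta^{k-p}),\ q-p+k)$ where $k=\max(n,p)$ and $\theta^0$ is the identity map. For a semigroup $T$, a diagonal subsemigroup of $T\times T$ is a subsemigroup containing $\{(t,t)\colon t\in T\}$; a congruence is a symmetric and transitive diagonal subsemigroup; $T$ is DSC if every diagonal subsemigroup of $T\times T$ is a congruence on $T$. *)

From Stdlib Require Import Arith.

Definition associative {T : Type} (op : T -> T -> T) : Prop :=
  forall x y z, op x (op y z) = op (op x y) z.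

Definition is_endomorphism {S : Type} (op : S -> S -> S) (theta : S -> S) : Prop :=
  forall x y, theta (op x y) = op (theta x) (theta y).

Fixpoint iter_map {S : Type} (k : nat) (theta : S -> S) (x : S) : S :=
  match k with
  | O => x
  | Datatypes.S k' => theta (iter_map k' theta x)
  end.

(* Bruck--Reilly extension BR(S, theta) on N0 x S x N0:
   (m,s,n)(p,t,q) = (m-n+k, (s theta^{k-n})(t theta^{k-p}), q-p+k), k = max(n,p).
   Since k >= n and k >= p, m - n + k = m + (k - n) and q - p + k = q + (k - p). *)
Definition BR_mul {S : Type} (op : S -> S -> S) (theta : S -> S)
  (x y : nat * S * nat) : nat * S * nat :=
  let '(m, s, n) := x in
  let '(p, t, q) := y in
  let k := Nat.max n p in
  (m + (k - n), op (iter_map (k - n) theta s) (iter_map (k - p) theta t), q + (k - p)).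

Definition diagonal_subsemigroup {T : Type} (op : T -> T -> T) (rho : T -> T -> Prop) : Prop :=
  (forall t, rho t t) /\
  (forall a b c d, rho a b -> rho c d -> rho (op a c) (op b d)).

Definition congruence {T : Type} (op : T -> T -> T) (rho : T -> T -> Prop) : Prop :=
  diagonal_subsemigroup op rho /\
  (forall a b, rho a b -> rho b a) /\
  (forall a b c, rho a b -> rho b c -> rho a c).

Definition DSC {T : Type} (op : T -> T -> T) : Prop :=
  forall rho : T -> T -> Prop, diagonal_subsemigroup op rho -> congruence op rho.

(* The map (m, s, n) |-> m - n is a homomorphism from BR(S, theta) onto (Z, +).
   Pulling back the order of Z along it gives a diagonal subsemigroup that is not
   symmetric, since (0, s, 0) precedes (1, s, 0) but not conversely. *)
From Stdlib Require Import ZArith Lia.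

Open Scope Z_scope.

Lemma diagonal_subsemigroup_Zle : diagonal_subsemigroup Z.add Z.le.
Proof. split; intros; lia. Qed.

Lemma diagonal_subsemigroup_preimage {T U : Type} (opT : T -> T -> T)
  (opU : U -> U -> U) (f : T -> U) (rho : U -> U -> Prop) :
  (forall x y, f (opT x y) = opU (f x) (f y)) ->
  diagonal_subsemigroup opU rho ->
  diagonal_subsemigroup opT (fun x y => rho (f x) (f y)).
Proof.
  intros f_mul [rho_refl rho_mul]; split.
  - intro t; apply rho_refl.
  - intros a b c d Hab Hcd; rewrite !f_mul; now apply rho_mul.
Qed.

Lemma not_DSC_of_Z_morphism {T : Type} (op : T -> T -> T) (f : T -> Z) (a b : T) :
  (forall x y, f (op x y) = f x + f y) -> f a <> f b -> ~ DSC op.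
Proof.
  intros f_mul fab HDSC.
  destruct (HDSC _ (diagonal_subsemigroup_preimage op Z.add f Z.le f_mul
                      diagonal_subsemigroup_Zle)) as [_ [le_sym _]].
  pose proof (le_sym a b); pose proof (le_sym b a); cbv beta in *; lia.
Qed.

Definition BR_degree {S : Type} (x : nat * S * nat) : Z :=
  let '(m, _, n) := x in Z.of_nat m - Z.of_nat n.

Lemma BR_degree_mul {S : Type} (op : S -> S -> S) (theta : S -> S) x y :
  BR_degree (BR_mul op theta x y) = BR_degree x + BR_degree y.
Proof.
  destruct x as [[m s] n], y as [[p t] q]; simpl.
  destruct (Nat.max_spec n p) as [[? ->] | [? ->]]; lia.
Qed.

Theorem mainTheorem11 (S : Type) (op : S -> S -> S) (theta : S -> S)
  (s0 : S) (Hassoc : associative op) (Htheta : is_endomorphism op theta) :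
  ~ DSC (BR_mul op theta).
Proof.
  apply (not_DSC_of_Z_morphism _ BR_degree (0%nat, s0, 0%nat) (1%nat, s0, 0%nat)).
  - apply BR_degree_mul.
  - discriminate.
Qed.
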